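(* Let $n>1$ and let $\mathcal{P}$ be an LS-packing of $n$ unit diameter disks in $\mathbb{E}^2$ with $c(\mathcal{P})=\lfloor 2n-2\sqrt{n}\rfloor$ such that the contact graph $G_c(\mathcal{P})$ is $2$-connected. Let $v$ be the number of vertices of the simple closed polygon bounding the external face of $G_c(\mathcal{P})$. Then the two inequalities $$c(\mathcal{P})+1\leq(2n-4)-2\sqrt{n-v}\qquad\text{and}\qquad 2(c(\mathcal{P})+1)-3n+4\leq n-v$$ cannot hold simultaneously.
   Context: A packing of disks in $\mathbb{E}^2$ is a family of disks with pairwise disjoint interiors. A packing is totally separable (a TS-packing) if any two of its disks can be separated by a line disjoint from the interior of every disk of the packing; it is locally separable (an LS-packing) if each disk together with the disks of the packing tangent to it form a TS-packing. The contact number $c(\mathcal{P})$ is the number of unordered pairs of tangent disks. The contact graph $G_c(\mathcal{P})$ is embedded in $\mathbb{E}^2$ with vertices the centers of the disks and edges the unit-length segments joining centers of tangent disks. *)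

From Stdlib Require Import Reals Lra List Relations ClassicalEpsilon.
Import ListNotations.
Open Scope R_scope.

Definition point := (R * R)%type.

Definition dist (p q : point) : R :=
  sqrt ((fst p - fst q) ^ 2 + (snd p - snd q) ^ 2).

Definition count_P {A : Type} (P : A -> Prop) (l : list A) : nat :=
  length (filter (fun a => if excluded_middle_informative (P a) then true else false) l).

(* A configuration of n unit-diameter (radius 1/2) disks is given by its
   centers p 0, ..., p (n-1). *)

(* Packing: pairwise disjoint interiors. *)
Definition is_packing (n : nat) (p : nat -> point) : Prop :=
  forall i j, (i < n)%nat -> (j < n)%nat -> i <> j -> dist (p i) (p j) >= 1.

Definition tangent (p : nat -> point) (i j : nat) : Prop :=
  i <> j /\ dist (p i) (p j) = 1.

(* Disks a and b (members of family F) are separated by a line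
   {x | u.x = c} (|u| = 1) that is disjoint from the interior of every disk
   of F (i.e. at distance >= 1/2 from every center of F). *)
Definition separable_in (F : nat -> Prop) (p : nat -> point) (a b : nat) : Prop :=
  exists u1 u2 c : R,
    u1 ^ 2 + u2 ^ 2 = 1 /\
    (forall k, F k -> Rabs (u1 * fst (p k) + u2 * snd (p k) - c) >= 1 / 2) /\
    (u1 * fst (p a) + u2 * snd (p a) - c) * (u1 * fst (p b) + u2 * snd (p b) - c) < 0.

Definition TS_family (F : nat -> Prop) (p : nat -> point) : Prop :=
  forall a b, F a -> F b -> a <> b -> separable_in F p a b.

Definition is_LS_packing (n : nat) (p : nat -> point) : Prop :=
  is_packing n p /\
  forall i, (i < n)%nat ->
    TS_family (fun k => k = i \/ ((k < n)%nat /\ tangent p i k)) p.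

Definition contact_number (n : nat) (p : nat -> point) : nat :=
  count_P (fun ij : nat * nat => (fst ij < snd ij)%nat /\ tangent p (fst ij) (snd ij))
          (list_prod (seq 0 n) (seq 0 n)).

Definition contact_adj_minus (n : nat) (p : nat -> point) (S : nat -> Prop)
    (a b : nat) : Prop :=
  (a < n)%nat /\ (b < n)%nat /\ ~ S a /\ ~ S b /\ tangent p a b.

Definition contact_connected_minus (n : nat) (p : nat -> point) (S : nat -> Prop) : Prop :=
  forall i j, (i < n)%nat -> (j < n)%nat -> ~ S i -> ~ S j ->
    clos_refl_trans nat (contact_adj_minus n p S) i j.

Definition contact_2connected (n : nat) (p : nat -> point) : Prop :=
  (3 <= n)%nat /\
  contact_connected_minus n p (fun _ => False) /\
  forall k, (k < n)%nat -> contact_connected_minus n p (fun x => x = k).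

(* The embedded contact graph (as a point set): vertices (centers) and the
   unit segments joining centers of tangent disks. *)
Definition on_drawing (n : nat) (p : nat -> point) (x : point) : Prop :=
  (exists i, (i < n)%nat /\ x = p i) \/
  (exists i j t, (i < n)%nat /\ (j < n)%nat /\ tangent p i j /\ 0 <= t <= 1 /\
     x = ((1 - t) * fst (p i) + t * fst (p j), (1 - t) * snd (p i) + t * snd (p j))).

(* x lies in the external (unbounded) face: x is off the drawing and can be
   joined, by a continuous path avoiding the drawing, to points arbitrarily far
   away (i.e. the path-component of x in the complement is unbounded). *)
Definition in_external_face (n : nat) (p : nat -> point) (x : point) : Prop :=
  ~ on_drawing n p x /\
  forall M : R, exists g : R -> point,
    continuity (fun t => fst (g t)) /\ continuity (fun t => snd (g t)) /\
    g 0 = x /\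
    (forall t, 0 <= t <= 1 -> ~ on_drawing n p (g t)) /\
    dist (g 1) (0, 0) > M.

Definition on_external_boundary (n : nat) (p : nat -> point) (i : nat) : Prop :=
  forall eps, eps > 0 -> exists x, in_external_face n p x /\ dist x (p i) < eps.

Definition external_vertex_count (n : nat) (p : nat -> point) : nat :=
  count_P (on_external_boundary n p) (seq 0 n).

From Stdlib Require Import Reals Lra Psatz.
Open Scope R_scope.

(* The first inequality, together with c + 1 > 2n - 2 sqrt n, gives
   sqrt (n - v) < sqrt n - 2.  The second one, together with the same bound,
   gives n - v > n - 4 sqrt n + 4 = (sqrt n - 2)^2, whence
   sqrt (n - v) > sqrt n - 2. *)

Lemma lt_sqrt_of_sqr_lt (x y : R) : x ^ 2 < y -> x < sqrt y.
Proof.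
  intros Hxy.
  destruct (Rlt_or_le x 0) as [Hx | Hx].
  - pose proof (sqrt_pos y); lra.
  - rewrite <- (sqrt_pow2 x Hx).
    apply sqrt_lt_1_alt; split; [apply pow2_ge_0 | exact Hxy].
Qed.

Lemma sqrt_gap_lower_bound (N C m : R) :
  0 <= N -> 2 * N - 2 * sqrt N < C + 1 -> 2 * (C + 1) - 3 * N + 4 <= m ->
  sqrt N - 2 < sqrt m.
Proof.
  intros HN Hfloor Hm.
  apply lt_sqrt_of_sqr_lt.
  pose proof (sqrt_sqrt N HN).
  nra.
Qed.

Lemma sqrt_gap_upper_bound (N C m : R) :
  2 * N - 2 * sqrt N < C + 1 -> C + 1 <= 2 * N - 4 - 2 * sqrt m ->
  sqrt m < sqrt N - 2.
Proof. lra. Qed.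

Lemma contact_bounds_incompatible (N C m : R) :
  0 <= N -> 2 * N - 2 * sqrt N < C + 1 ->
  ~ (C + 1 <= 2 * N - 4 - 2 * sqrt m /\ 2 * (C + 1) - 3 * N + 4 <= m).
Proof.
  intros HN Hfloor [Hfirst Hsecond].
  pose proof (sqrt_gap_lower_bound N C m HN Hfloor Hsecond).
  pose proof (sqrt_gap_upper_bound N C m Hfloor Hfirst).
  lra.
Qed.

Theorem proposition1 (n : nat) (p : nat -> point) :
  (1 < n)%nat ->
  is_LS_packing n p ->
  (* c(P) = floor (2n - 2 sqrt n) *)
  INR (contact_number n p) <= 2 * INR n - 2 * sqrt (INR n) < INR (contact_number n p) + 1 ->
  contact_2connected n p ->
  let c := INR (contact_number n p) in
  let v := INR (external_vertex_count n p) in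
  ~ (c + 1 <= (2 * INR n - 4) - 2 * sqrt (INR n - v) /\
     2 * (c + 1) - 3 * INR n + 4 <= INR n - v).
Proof.
  intros _ _ [_ Hfloor] _ c v.
  apply contact_bounds_incompatible; [apply pos_INR | exact Hfloor].
Qed.
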